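(* Let $v\ge 2$, $l\ge 1$ and $t\ge1$ be integers, put $n=vl$, and assume $n\ge 2vt$. Let $B$ be the set of sequences $\sigma\in\mathbb{Z}_v^n$ (indexed by $\mathbb{Z}_n$) in which every symbol occurs exactly $l$ times, and choose $\sigma\in B$ uniformly at random. For $b\in\mathbb{Z}_v$ let $$\rho(b,t)=\#\{i\in\mathbb{Z}_n:\ \sigma(i-1)\neq b,\ \sigma(i+t)\neq b,\ \sigma(i+\iota)=b\text{ for all }0\le\iota<t\},$$ indices taken modulo $n$. Then $$E(\rho(b,t))=\frac{(l(v-1)-1)(v-1)\,l\,(l)_t}{(n-1)_{t+1}},$$ $$\mathrm{VAR}(\rho(b,t))=\frac{(l(v-1)-1)(v-1)l(l)_t}{(n-1)_{t+1}}-\left(\frac{(l(v-1)-1)(v-1)l(l)_t}{(n-1)_{t+1}}\right)^2+\frac{(v-1)\,l\,(l)_{2t}\,(l(v-1)-1)^2\,(l(v-1)-2)}{(n-1)_{2t+2}}.$$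
   Context: $(x)_m=x(x-1)\cdots(x-m+1)$ denotes the falling factorial. $\rho(b,t)$ is the number of (cyclic) runs of symbol $b$ of length exactly $t$ in $\sigma$. *)

From mathcomp Require Import all_boot all_order all_algebra.
Set Implicit Arguments. Unset Strict Implicit. Unset Printing Implicit Defensive.
Import GRing.Theory Num.Theory.

Definition word (v n : nat) := {ffun 'I_n -> 'I_v}.

Definition sym_at v n (s : word v n) (k : nat) (b : 'I_v) : bool :=
  [exists j : 'I_n, (val j == k %% n) && (s j == b)].

Definition balanced v n l (s : word v n) : bool :=
  [forall b : 'I_v, #|[set i : 'I_n | s i == b]| == l].

Definition rho v n (s : word v n) (b : 'I_v) (t : nat) : nat :=
  #|[set i : 'I_n | [&& ~~ sym_at s (i + n - 1) b, ~~ sym_at s (i + t) b &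
                        [forall k : 'I_t, sym_at s (i + k) b]]]|.

Definition E_rho v l (b : 'I_v) (t : nat) : rat :=
  (\sum_(s : word v (v * l) | balanced l s) (rho s b t)%:R)
  / (#|[set s : word v (v * l) | balanced l s]|)%:R.

Definition E_rho2 v l (b : 'I_v) (t : nat) : rat :=
  (\sum_(s : word v (v * l) | balanced l s) ((rho s b t)%:R ^+ 2))
  / (#|[set s : word v (v * l) | balanced l s]|)%:R.

Definition VAR_rho v l (b : 'I_v) (t : nat) : rat :=
  E_rho2 l b t - (E_rho l b t) ^+ 2.

From mathcomp Require Import all_boot all_order all_algebra fingroup perm zify ring.
Set Implicit Arguments. Unset Strict Implicit. Unset Printing Implicit Defensive.
Import GRing.Theory Num.Theory.

(* Permuting positions preserves B and acts transitively on the
   l-subsets of Z_n, so s |-> s^-1(b) pushes the uniform distribution on B to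
   the uniform distribution on l-subsets S of Z_n, and rho(b,t) counts the i
   at which a run of S of length exactly t starts.  Both moments thus reduce
   to counting l-subsets that contain p prescribed positions and avoid q
   others, which is C(n-p-q, l-p).  For rho^2 one sums over pairs of starts
   (i, i+d): d = 0 gives C(n-t-2, l-t), overlapping or touching runs give
   nothing, the two runs sharing one separating gap (d = t+1 or n-t-1) give
   C(n-2t-3, l-2t), and all other d give C(n-2t-4, l-2t).  The identity
   C(n-k-m, l-k) (n)_(k+m) = C(n,l) (l)_k (n-l)_m turns these counts into
   falling factorials. *)

Lemma card_draws_between (T : finType) (P Q : {set T}) l :
  [disjoint P & Q] -> #|P| <= l ->
  #|[set S : {set T} | [&& #|S| == l, P \subset S & [disjoint Q & S]]]|
    = 'C(#|T| - #|P| - #|Q|, l - #|P|).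
Proof.
move=> dPQ lePl; set R := ~: (P :|: Q).
have cR : #|T| - #|P| - #|Q| = #|R|.
  have := cardsC (P :|: Q); rewrite -/R cardsU (disjoint_setI0 dPQ) cards0; lia.
have dRP : [disjoint R & P] by rewrite disjoint_sym disjoints_subset setCK subsetUl.
have dRQ : [disjoint Q & R] by rewrite disjoints_subset setCK subsetUr.
have -> : [set S : {set T} | [&& #|S| == l, P \subset S & [disjoint Q & S]]]
    = (fun A => A :|: P) @: [set A : {set T} | A \subset R & #|A| == l - #|P|].
  apply/setP => S; rewrite inE; apply/and3P/imsetP.
  - case=> /eqP cS sPS dQS; exists (S :\: P); last first.
      apply/setP => x; rewrite !inE.
      by case: (boolP (x \in P)) => [/(subsetP sPS) ->|]; rewrite ?orbT ?orbF.
    rewrite inE cardsD (setIidPr sPS) cS eqxx andbT; apply/subsetP => x.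
    rewrite !inE negb_or => /andP[-> xS] /=.
    by apply/negP => xQ; rewrite (disjointFr dQS xQ) in xS.
  - case=> A; rewrite inE => /andP[sAR /eqP cA] ->.
    have dAP := disjointWl sAR dRP.
    have dAQ : [disjoint A & Q] by rewrite disjoint_sym (disjointWr sAR dRQ).
    split; [|exact: subsetUr|].
      by rewrite cardsU (disjoint_setI0 dAP) cards0 subn0 cA subnK.
    by rewrite disjoint_sym disjoints_subset subUset -!disjoints_subset dAQ.
rewrite card_in_imset ?cR ?cards_draws // => A1 A2.
rewrite !inE => /andP[s1 _] /andP[s2 _] e12.
have dAP (A : {set T}) : A \subset R -> A = (A :|: P) :\: P.
  by move=> sAR; rewrite setDUl setDv setU0; apply/esym/setDidPl/(disjointWl sAR dRP).
by rewrite (dAP _ s1) (dAP _ s2) e12.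
Qed.

Definition cyc_in n (S : {set 'I_n}) (k : nat) : bool :=
  [exists j : 'I_n, (val j == k %% n) && (j \in S)].

Lemma cyc_in_addn n (S : {set 'I_n}) k : cyc_in S (k + n) = cyc_in S k.
Proof. by rewrite /cyc_in modnDr. Qed.

Lemma card_draws_cyc n (i : nat) (cP cQ : seq nat) l : 0 < n ->
  uniq (cP ++ cQ) -> all (fun c => c < n) (cP ++ cQ) -> size cP <= l ->
  #|[set S : {set 'I_n} | [&& #|S| == l, all (fun c => cyc_in S (i + c)) cP
        & all (fun c => ~~ cyc_in S (i + c)) cQ]]|
  = 'C(n - size cP - size cQ, l - size cP).
Proof.
case: n => // n _ u al sl.
pose pos c : 'I_n.+1 := inord ((i + c) %% n.+1).
have posE c : nat_of_ord (pos c) = (i + c) %% n.+1 by rewrite /pos inordK // ltn_mod.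
have cyc_inE S c : cyc_in S (i + c) = (pos c \in S).
  apply/existsP/idP => [[j /andP[/eqP vj jS]]|pS].
    by have -> : pos c = j by apply: val_inj; rewrite /= posE vj.
  by exists (pos c); rewrite pS andbT; apply/eqP; exact: posE.
have pos_inj : {in cP ++ cQ &, injective pos}.
  move=> c1 c2 c1in c2in /(congr1 val); rewrite /= !posE => /eqP.
  rewrite eqn_modDl !modn_small => [/eqP //||].
  - by move/allP: al => /(_ c2 c2in).
  - by move/allP: al => /(_ c1 c1in).
move: u; rewrite cat_uniq => /and3P[uP dPQ uQ].
pose P := [set x in map pos cP].
pose Q := [set x in map pos cQ].
have card_pos (c : seq nat) : {subset c <= cP ++ cQ} -> uniq c -> #|[set x in map pos c]| = size c.
  move=> sc uc; rewrite cardsE -(size_map pos); apply/card_uniqP.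
  by rewrite map_inj_in_uniq // => c1 c2 /sc h1 /sc h2; apply: pos_inj.
have cP' : #|P| = size cP by apply: card_pos => // c; rewrite mem_cat => ->.
have cQ' : #|Q| = size cQ by apply: card_pos => // c; rewrite mem_cat orbC => ->.
have dPQ' : [disjoint P & Q].
  rewrite disjoints_subset; apply/subsetP => x; rewrite !inE => /mapP[c1 c1P ->].
  apply/mapP => [[c2 c2Q e]].
  have e12 : c1 = c2 by apply: pos_inj e; rewrite mem_cat ?c1P ?c2Q ?orbT.
  by move/hasPn: dPQ => /(_ c2 c2Q); rewrite -e12 c1P.
have := card_draws_between dPQ' (_ : #|P| <= l); rewrite card_ord cP' cQ' => <- //.
apply: eq_card => S; rewrite !inE; congr [&& _, _ & _].
  apply/allP/subsetP => [h x|h c cin]; last by rewrite cyc_inE h // inE map_f.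
  by rewrite inE => /mapP[c cin ->]; rewrite -cyc_inE h.
rewrite disjoint_sym disjoints_subset; apply/allP/subsetP => [h x xS|h c cin].
  by rewrite !inE; apply/negP => /mapP[c cin e]; move: (h c cin); rewrite cyc_inE -e xS.
by rewrite cyc_inE; apply/negP => pS; move: (h _ pS); rewrite !inE map_f.
Qed.

Lemma exists_perm_onto (T : finType) (S S' : {set T}) : #|S| = #|S'| ->
  exists p : {perm T}, forall x, (p x \in S) = (x \in S').
Proof.
move=> cS.
have cC : #|~: S| = #|~: S'| by have := cardsC S; have := cardsC S'; lia.
pose g (A B : {set T}) x := nth x (enum A) (index x (enum B)).
have index_lt (A B : {set T}) z : #|A| = #|B| -> z \in B -> index z (enum B) < size (enum A).
  by move=> cAB zB; rewrite -cardE cAB cardE index_mem mem_enum.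
have g_mem (A B : {set T}) x : #|A| = #|B| -> x \in B -> g A B x \in A.
  by move=> cAB xB; rewrite -mem_enum mem_nth ?index_lt.
have g_inj (A B : {set T}) : #|A| = #|B| -> {in B &, injective (g A B)}.
  move=> cAB x y xB yB; rewrite /g (set_nth_default y) ?index_lt // => /eqP.
  rewrite nth_uniq ?enum_uniq ?index_lt // => /eqP.
  by apply: (index_inj x); rewrite mem_enum.
pose f y := if y \in S' then g S S' y else g (~: S) (~: S') y.
have fS x : (f x \in S) = (x \in S').
  rewrite /f; case: ifP => xS'; first exact: g_mem.
  by apply/negbTE; rewrite -in_setC; apply: g_mem; rewrite // inE xS'.
have f_inj : injective f.
  move=> x y e; have xy : (x \in S') = (y \in S') by rewrite -fS e fS.
  move: e; rewrite /f -xy; case: ifP => xS' e.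
    by apply: (g_inj _ _ cS); rewrite // -xy.
  by apply: (g_inj _ _ cC) e; rewrite inE -?xy xS'.
by exists (perm f_inj) => x; rewrite permE.
Qed.

Definition positions v n (s : word v n) (b : 'I_v) : {set 'I_n} := [set i | s i == b].

Lemma card_balanced_positions_le v n l (b : 'I_v) (S S' : {set 'I_n}) : #|S| = #|S'| ->
  #|[set s : word v n | balanced l s & positions s b == S]|
  <= #|[set s : word v n | balanced l s & positions s b == S']|.
Proof.
move=> /exists_perm_onto[p pS].
pose permute (s : word v n) : word v n := [ffun x => s (p x)].
have permute_inj : injective permute.
  move=> s1 s2 /ffunP e; apply/ffunP => y.
  by have := e (p^-1 y)%g; rewrite !ffunE permKV.
rewrite -(card_imset _ permute_inj); apply/subset_leq_card/subsetP => _ /imsetP[s + ->].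
rewrite !inE => /andP[/forallP bal /eqP posS]; apply/andP; split.
  apply/forallP => c; apply/eqP.
  rewrite -(eqP (bal c)) -[RHS](card_preimset _ (@perm_inj _ p)).
  by apply: eq_card => x; rewrite !inE ffunE.
by apply/eqP/setP => x; rewrite !inE ffunE -pS -posS inE.
Qed.

Lemma balanced_exists v l : 0 < l -> exists s : word v (v * l), balanced l s.
Proof.
move=> l0.
have lt_div (i : 'I_(v * l)) : i %/ l < v by rewrite ltn_divLR // mulnC.
exists [ffun i => Ordinal (lt_div i)]; apply/forallP => c.
have lt_block (j : 'I_l) : c * l + j < v * l.
  by have := ltn_ord c; have := ltn_ord j; nia.
have -> : [set i | [ffun i => Ordinal (lt_div i)] i == c]
    = [set Ordinal (lt_block j) | j : 'I_l].
  apply/setP => i; rewrite !inE ffunE; apply/eqP/imsetP => [/(congr1 val) /= ic|[j _ ->]].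
    exists (Ordinal (ltn_pmod i l0)) => //; apply: val_inj => /=.
    by rewrite -ic; apply: divn_eq.
  apply: val_inj => /=.
  by rewrite divnDl ?dvdn_mull // mulnK // divn_small // addn0.
by rewrite card_imset ?card_ord // => j1 j2 [] /addnI /val_inj.
Qed.

Lemma sum_balanced_positions (V : nmodType) v n l (b : 'I_v) (g : {set 'I_n} -> V)
    (s0 : word v n) : balanced l s0 ->
  (\sum_(s : word v n | balanced l s) g (positions s b)
   = (\sum_(S : {set 'I_n} | #|S| == l) g S)
       *+ #|[set s : word v n | balanced l s & positions s b == positions s0 b]|)%R.
Proof.
have card_pos (s : word v n) : balanced l s -> #|positions s b| == l by move/forallP/(_ b).
move=> bal0; rewrite -sumrMnl (partition_big (fun s => positions s b) (fun S => #|S| == l)) //=.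
apply: eq_bigr => S /eqP cS.
rewrite (eq_bigr (fun=> g S)) => [|s /andP[_ /eqP ->] //]; rewrite sumr_const.
have cS0 : #|S| = #|positions s0 b| by rewrite cS (eqP (card_pos _ bal0)).
congr (_ *+ _)%R; rewrite -(@eq_card _ [set s | balanced l s & positions s b == S]).
  by apply/anti_leq; rewrite !card_balanced_positions_le.
by move=> s; rewrite inE.
Qed.

Lemma mean_balanced_positions (R : numFieldType) v n l (b : 'I_v) (g : {set 'I_n} -> R) :
  (exists s : word v n, balanced l s) ->
  ((\sum_(s : word v n | balanced l s) g (positions s b))
     / #|[set s : word v n | balanced l s]|%:R
   = (\sum_(S : {set 'I_n} | #|S| == l) g S) / 'C(n, l)%:R)%R.
Proof.
case=> s0 bal0.
set k := #|[set s : word v n | balanced l s & positions s b == positions s0 b]|.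
have k_gt0 : 0 < k by apply/card_gt0P; exists s0; rewrite inE bal0 eqxx.
have cardB : #|[set s : word v n | balanced l s]| = ('C(n, l) * k)%N.
  have := sum_balanced_positions b (fun=> 1%N) bal0; rewrite -/k.
  rewrite !sum1dep_card card_draws card_ord => ->.
  by rewrite -mulr_natr natn.
rewrite (sum_balanced_positions b g bal0) cardB natrM -/k.
rewrite -(mulr_natr (\sum_(S : {set 'I_n} | #|S| == l) g S)) invfM mulrACA.
by rewrite divff ?mulr1 // pnatr_eq0 -lt0n.
Qed.

Definition run_at n (S : {set 'I_n}) t (i : nat) : bool :=
  [&& ~~ cyc_in S (i + n - 1), ~~ cyc_in S (i + t) & [forall k : 'I_t, cyc_in S (i + k)]].

Lemma rho_runs v n (s : word v n) b t :
  rho s b t = (\sum_(i < n) run_at (positions s b) t i)%N.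
Proof.
have symE k : sym_at s k b = cyc_in (positions s b) k.
  by rewrite /sym_at /cyc_in; apply: eq_existsb => j; rewrite inE.
rewrite /rho -sum1_card big_mkcond /=; apply: eq_bigr => i _.
rewrite inE /run_at !symE; congr (nat_of_bool (_ && _)); congr (_ && _).
by apply: eq_forallb => k; rewrite symE.
Qed.

Lemma run_at_addn n (S : {set 'I_n}) t k : run_at S t (k + n) = run_at S t k.
Proof.
rewrite /run_at.
have -> : k + n + n - 1 = (k + n - 1) + n by case: n S => [|n] S; lia.
have -> : k + n + t = (k + t) + n by lia.
rewrite !cyc_in_addn; congr [&& _, _ & _]; apply: eq_forallb => j.
by rewrite -addnA (addnC n) addnA cyc_in_addn.
Qed.

Lemma sum_ord_shift n (f : nat -> nat) i : (forall k, f (k + n) = f k) ->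
  (\sum_(d < n) f (i + d) = \sum_(d < n) f d)%N.
Proof.
move=> fp; elim: i => [|i IH]; first by [].
rewrite -IH; case: n fp {IH} => [|n] fp; first by rewrite !big_ord0.
rewrite big_ord_recr big_ord_recl /= addnC; congr (_ + _).
  by rewrite addn0 -(fp i); congr f; lia.
by apply: eq_bigr => j _; congr f; rewrite /bump /=; lia.
Qed.

Lemma sum_nat_bool (T : finType) (P b : pred T) :
  (\sum_(x | P x) (b x : nat))%N = #|[set x | P x && b x]|.
Proof.
rewrite -sum1_card big_mkcond /= [RHS]big_mkcond /=; apply: eq_bigr => x _.
by rewrite inE; case: (P x); case: (b x).
Qed.

Lemma forall_ord_iota t (p : nat -> bool) : [forall k : 'I_t, p k] = all p (iota 0 t).
Proof.
apply/forallP/allP => [h x|h x]; last by apply: h; rewrite mem_iota /=.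
by rewrite mem_iota => /andP[_ xt]; exact: (h (Ordinal xt)).
Qed.

Lemma run_at_shift n (S : {set 'I_n}) t i d : 0 < n -> run_at S t (i + d) =
  [&& ~~ cyc_in S (i + (d + n - 1)), ~~ cyc_in S (i + (d + t))
    & all (fun c => cyc_in S (i + c)) (iota d t)].
Proof.
move=> n0; rewrite /run_at.
have -> : i + d + n - 1 = i + (d + n - 1) by lia.
rewrite (forall_ord_iota t (fun k => cyc_in S (i + d + k))) -addnA; congr [&& _, _ & _].
by rewrite -[d]addn0 iotaDl all_map addn0; apply: eq_all => c /=; rewrite addnA.
Qed.

Lemma run_atE n (S : {set 'I_n}) t i : 0 < n -> run_at S t i =
  [&& ~~ cyc_in S (i + (n - 1)), ~~ cyc_in S (i + t)
    & all (fun c => cyc_in S (i + c)) (iota 0 t)].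
Proof. by move=> n0; rewrite -[i in LHS]addn0 run_at_shift // add0n. Qed.

Lemma uniq_two_blocks t d q : t <= d -> uniq q ->
  all (fun x => ~~ ((x < t) || (d <= x < d + t))) q -> uniq (iota 0 t ++ iota d t ++ q).
Proof.
move=> td uq aq; rewrite cat_uniq iota_uniq cat_uniq iota_uniq uq /= andbT.
apply/andP; split.
  apply/hasPn => x; rewrite mem_cat mem_iota => /orP[|xq].
    by move=> h; rewrite mem_iota; lia.
  by move/allP: aq => /(_ x xq); rewrite mem_iota; lia.
apply/hasPn => x xq; move/allP: aq => /(_ x xq); rewrite mem_iota; lia.
Qed.

Definition run_pair_count n l t i j :=
  #|[set S : {set 'I_n} | [&& #|S| == l, run_at S t i & run_at S t j]]|.

Lemma all_iota_lt n a t : a + t <= n -> all (fun c => c < n) (iota a t).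
Proof. by move=> h; apply/allP => x; rewrite mem_iota; lia. Qed.

Ltac bool_cases := by do ![case: (cyc_in _ _) | case: (all _ _) | case: (_ == _)].

Lemma run_pair_count_diag n l t i : t.+2 <= n -> t <= l ->
  run_pair_count n l t i i = 'C(n - t - 2, l - t).
Proof.
move=> h1 h2; rewrite /run_pair_count.
have -> : n - t - 2 = n - size (iota 0 t) - size [:: n-1; t] by rewrite size_iota /=; lia.
have -> : l - t = l - size (iota 0 t) by rewrite size_iota.
rewrite -(card_draws_cyc i) ?size_iota //; last 3 first.
- lia.
- by rewrite cat_uniq iota_uniq /= !mem_iota !inE; lia.
- by rewrite all_cat all_iota_lt //=; lia.
apply: eq_card => S; rewrite !inE andbb run_atE /=; last lia.
bool_cases.
Qed.

Lemma run_pair_count_overlap n l t i d : 0 < n -> 1 <= d <= t ->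
  run_pair_count n l t i (i + d) = 0.
Proof.
move=> n0 hd; apply: eq_card0 => S; rewrite !inE run_atE // run_at_shift //.
have e : cyc_in S (i + (d + n - 1)) = cyc_in S (i + (d - 1)).
  by rewrite (_ : i + (d + n - 1) = i + (d - 1) + n) ?cyc_in_addn //; lia.
have m : d - 1 \in iota 0 t by rewrite mem_iota; lia.
rewrite e; apply/negP => /andP[_ /andP[/and3P[_ _ /allP A] /and3P[/negP h _ _]]].
by apply: h; exact: A _ m.
Qed.

Lemma run_pair_count_overlap_prev n l t i d : 0 < n -> n - t <= d < n ->
  run_pair_count n l t i (i + d) = 0.
Proof.
move=> n0 hd; apply: eq_card0 => S; rewrite !inE run_atE // run_at_shift //.
have m : n - 1 \in iota d t by rewrite mem_iota; lia.
apply/negP => /andP[_ /andP[/and3P[/negP h _ _] /and3P[_ _ /allP A]]].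
by apply: h; exact: A _ m.
Qed.

Lemma run_pair_count_apart n l t i d (q : seq nat) : 0 < n -> t <= d -> d + t <= n -> uniq q ->
  all (fun x => ~~ ((x < t) || (d <= x < d + t))) q -> all (fun x => x < n) q ->
  2 * t <= l ->
  (forall S : {set 'I_n}, [&& ~~ cyc_in S (i + (n - 1)), ~~ cyc_in S (i + t),
       ~~ cyc_in S (i + (d + n - 1)) & ~~ cyc_in S (i + (d + t))]
     = all (fun c => ~~ cyc_in S (i + c)) q) ->
  run_pair_count n l t i (i + d) = 'C(n - 2 * t - size q, l - 2 * t).
Proof.
move=> n0 td dtn uq aq aqn tl hS; rewrite /run_pair_count.
have sz : size (iota 0 t ++ iota d t) = 2 * t by rewrite size_cat !size_iota; lia.
rewrite -sz -(card_draws_cyc i) ?sz //; last first.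
- by rewrite !all_cat !all_iota_lt //= ?aqn; lia.
- by rewrite -catA; apply: uniq_two_blocks.
apply: eq_card => S; rewrite !inE run_atE // run_at_shift // all_cat -hS.
bool_cases.
Qed.

Lemma run_pair_count_far n l t i d : t + 2 <= d -> d + t + 2 <= n -> 2 * t <= l ->
  run_pair_count n l t i (i + d) = 'C(n - 2 * t - 4, l - 2 * t).
Proof.
move=> h1 h2 h3.
apply: (@run_pair_count_apart _ _ _ _ _ [:: n - 1; t; d - 1; d + t]) => //; try lia.
- by rewrite /= !inE; lia.
- by rewrite /=; lia.
- by rewrite /=; lia.
move=> S; rewrite (_ : i + (d + n - 1) = i + (d - 1) + n) ?cyc_in_addn /=; last lia.
bool_cases.
Qed.

Lemma run_pair_count_next n l t i : 2 * t + 3 <= n -> 2 * t <= l ->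
  run_pair_count n l t i (i + t.+1) = 'C(n - 2 * t - 3, l - 2 * t).
Proof.
move=> h2 h3; apply: (@run_pair_count_apart _ _ _ _ _ [:: n - 1; t; t.+1 + t]) => //; try lia.
- by rewrite /= !inE; lia.
- by rewrite /=; lia.
- by rewrite /=; lia.
move=> S; rewrite (_ : i + (t.+1 + n - 1) = i + t + n) ?cyc_in_addn /=; last lia.
bool_cases.
Qed.

Lemma run_pair_count_prev n l t i : 2 * t + 3 <= n -> 2 * t <= l ->
  run_pair_count n l t i (i + (n - t.+1)) = 'C(n - 2 * t - 3, l - 2 * t).
Proof.
move=> h2 h3; apply: (@run_pair_count_apart _ _ _ _ _ [:: n - 1; t; n - t.+2]) => //; try lia.
- by rewrite /= !inE; lia.
- by rewrite /=; lia.
- by rewrite /=; lia.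
move=> S; rewrite (_ : i + (n - t.+1 + n - 1) = i + (n - t.+2) + n) ?cyc_in_addn /=; last lia.
rewrite (_ : n - t.+1 + t = n - 1); last lia.
bool_cases.
Qed.

Lemma sum_nat_range_eq0 m p (F : nat -> nat) : (forall d, m <= d < p -> F d = 0) ->
  \sum_(m <= d < p) F d = 0.
Proof.
by move=> h; rewrite (eq_big_nat _ _ (F2 := fun _ => 0)) ?sum_nat_const_nat ?muln0.
Qed.

Lemma sum_run_pair_count n l t i : 0 < t -> 2 * t + 3 <= n -> 2 * t <= l ->
  \sum_(d < n) run_pair_count n l t i (i + d) =
  'C(n - t - 2, l - t) + 2 * 'C(n - 2 * t - 3, l - 2 * t)
    + (n - 2 * t - 3) * 'C(n - 2 * t - 4, l - 2 * t).
Proof.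
move=> t0 hn hl.
rewrite -(big_mkord xpredT (fun d => run_pair_count n l t i (i + d))).
rewrite (@big_cat_nat _ _ _ 1) //=; last lia.
rewrite big_nat1 addn0 run_pair_count_diag; try lia.
rewrite (@big_cat_nat _ _ _ t.+1) //=; try lia.
rewrite sum_nat_range_eq0; last by move=> d hd; apply: run_pair_count_overlap; lia.
rewrite (@big_cat_nat _ _ _ t.+2) //=; try lia.
rewrite big_nat1 run_pair_count_next //.
rewrite (@big_cat_nat _ _ _ (n - t.+1)) //=; try lia.
rewrite (eq_big_nat _ _ (F2 := fun _ => 'C(n - 2 * t - 4, l - 2 * t))); last first.
  by move=> d hd; apply: run_pair_count_far; lia.
rewrite sum_nat_const_nat.
rewrite (@big_cat_nat _ _ _ (n - t)) //=; try lia.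
rewrite (_ : n - t = (n - t.+1).+1); last lia.
rewrite big_nat1 run_pair_count_prev //.
rewrite sum_nat_range_eq0; last by move=> d hd; apply: run_pair_count_overlap_prev; lia.
rewrite (_ : n - t.+1 - t.+2 = n - 2 * t - 3); last lia.
lia.
Qed.

Lemma sum_runs n l t : t.+2 <= n -> t <= l ->
  \sum_(S : {set 'I_n} | #|S| == l) (\sum_(i < n) run_at S t i) = n * 'C(n - t - 2, l - t).
Proof.
move=> h1 h2; rewrite exchange_big /=.
rewrite (eq_bigr (fun _ => 'C(n - t - 2, l - t))).
  by rewrite sum_nat_const card_ord.
move=> i _; rewrite sum_nat_bool -(run_pair_count_diag i h1 h2) /run_pair_count.
by apply: eq_card => S; rewrite !inE andbb.
Qed.

Lemma sum_runs_sqr n l t : 0 < t -> 2 * t + 3 <= n -> 2 * t <= l ->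
  \sum_(S : {set 'I_n} | #|S| == l) (\sum_(i < n) run_at S t i) ^ 2 =
  n * ('C(n - t - 2, l - t) + 2 * 'C(n - 2 * t - 3, l - 2 * t)
    + (n - 2 * t - 3) * 'C(n - 2 * t - 4, l - 2 * t)).
Proof.
move=> t0 hn hl.
have -> : \sum_(S : {set 'I_n} | #|S| == l) (\sum_(i < n) run_at S t i) ^ 2 =
    \sum_(i < n) \sum_(j < n) run_pair_count n l t i j.
  rewrite (eq_bigr (fun S => \sum_(i < n) \sum_(j < n) (run_at S t i && run_at S t j : nat))).
    rewrite exchange_big /=; apply: eq_bigr => i _.
    rewrite exchange_big /=; apply: eq_bigr => j _.
    by rewrite sum_nat_bool.
  move=> S _; rewrite expnS expn1 big_distrl /=; apply: eq_bigr => i _.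
  rewrite big_distrr /=; apply: eq_bigr => j _.
  by case: (run_at S t i); case: (run_at S t j).
rewrite (eq_bigr (fun _ => 'C(n - t - 2, l - t) + 2 * 'C(n - 2 * t - 3, l - 2 * t)
    + (n - 2 * t - 3) * 'C(n - 2 * t - 4, l - 2 * t))).
  by rewrite sum_nat_const card_ord.
move=> i _; rewrite -(sum_run_pair_count i t0 hn hl).
rewrite -(@sum_ord_shift n (fun j => run_pair_count n l t i j) i) //.
move=> k; rewrite /run_pair_count; apply: eq_card => S; rewrite !inE run_at_addn //.
Qed.

Lemma bin_sub_ffact n l k m : k <= l ->
  'C(n - k - m, l - k) * n ^_ (k + m) = 'C(n, l) * l ^_ k * (n - l) ^_ m.
Proof.
move=> kl.
have [mle|mgt] := leqP m (n - l); last first.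
  rewrite (ffact_small mgt) muln0.
  have [kmn|kmn] := leqP (k + m) n; last by rewrite ffact_small // muln0.
  rewrite bin_small ?mul0n //; lia.
have [ln|ln] := leqP l n; last first.
  rewrite (bin_small ln) !mul0n.
  have [kmn|kmn] := leqP (k + m) n; last by rewrite ffact_small // muln0.
  rewrite bin_small ?mul0n //; lia.
set a := l - k; set b := n - l - m.
have e : n - k - m = a + b by rewrite /a /b; lia.
apply/eqP; rewrite -(@eqn_pmul2r (a`! * b`!)) ?muln_gt0 ?fact_gt0 //; apply/eqP.
transitivity (n`!).
  rewrite e; transitivity ('C(a + b, a) * (a`! * b`!) * n ^_ (k + m)); first ring.
  have hb := bin_fact (leq_addr b a); rewrite addKn in hb; rewrite hb.
  rewrite -(ffact_fact (_ : k + m <= n)); last lia.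
  by rewrite mulnC; congr (_ * _); congr (_`!); rewrite /a /b; lia.
rewrite -(bin_fact ln).
rewrite -(ffact_fact kl) -(ffact_fact mle).
rewrite (_ : n - l - m = b) // (_ : l - k = a) //.
ring.
Qed.

Lemma ffact3_double_add_ffact4 m : 1 < m -> 2 * m ^_ 3 + m ^_ 4 = m * (m - 1) ^ 2 * (m - 2).
Proof.
case: m => [|[|[|m]]] // _.
rewrite !ffactSS ffactn1 ffactn0 !subSS !subn0 expnS expn1.
by rewrite -[m.+3]addn3 -[m.+2]addn2 -[m.+1]addn1; ring.
Qed.

Local Open Scope ring_scope.

Lemma mean_runs_ffact n l t : (t <= l)%N -> (l < n)%N -> (t.+2 <= n)%N ->
  (n * 'C(n - t - 2, l - t))%:R / 'C(n, l)%:R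
  = ((n - l)%:R - 1) * (n - l)%:R * (l ^_ t)%:R / (n.-1 ^_ t.+1)%:R :> rat.
Proof.
move=> tl ln tn; have nF : (0 < n.-1 ^_ t.+1)%N by rewrite ffact_gt0; lia.
apply/eqP; rewrite eqr_div ?pnatr_eq0 -?lt0n ?bin_gt0 ?(ltnW ln) //.
rewrite -(natrB _ (_ : 1 <= n - l)%N) ?subn_gt0 // -!natrM eqr_nat; apply/eqP.
have := bin_sub_ffact n 2 tl; rewrite addn2 ffactnS [(n - l) ^_ 2]ffactnS ffactn1 -!subn1.
move=> e; transitivity ('C(n - t - 2, l - t) * (n * (n - 1) ^_ t.+1))%N; first ring.
by rewrite e; ring.
Qed.

Lemma pair_runs_ffact n l t : (2 * t <= l)%N -> (l.+2 <= n)%N -> (2 * t + 3 <= n)%N ->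
  (n * (2 * 'C(n - 2 * t - 3, l - 2 * t)
        + (n - 2 * t - 3) * 'C(n - 2 * t - 4, l - 2 * t)))%:R / 'C(n, l)%:R
  = (n - l)%:R * (l ^_ (2 * t))%:R * ((n - l)%:R - 1) ^+ 2 * ((n - l)%:R - 2)
      / (n.-1 ^_ (2 * t + 2))%:R :> rat.
Proof.
move=> tl ln tn; have nF : (0 < n.-1 ^_ (2 * t + 2))%N by rewrite ffact_gt0; lia.
apply/eqP; rewrite eqr_div ?pnatr_eq0 -?lt0n ?bin_gt0 //; last lia.
rewrite -(natrB _ (_ : 1 <= n - l)%N) -?(natrB _ (_ : 2 <= n - l)%N); try lia.
rewrite -natrX -!natrM eqr_nat; apply/eqP.
set C := 'C(n, l); set L := l ^_ (2 * t); set M := (n - l)%N.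
have nZ : (n * n.-1 ^_ (2 * t + 2) = n ^_ (2 * t + 3))%N by rewrite (addnS _ 2) ffactnS.
have h3 := bin_sub_ffact n 3 tl.
have h4 : ((n - 2 * t - 3) * 'C(n - 2 * t - 4, l - 2 * t) * n ^_ (2 * t + 3)
            = C * L * M ^_ 4)%N.
  rewrite -(bin_sub_ffact n 4 tl) (addnS _ 3) ffactnSr.
  rewrite (_ : n - (2 * t + 3) = n - 2 * t - 3)%N ?subnDA //.
  by ring.
transitivity (2 * ('C(n - 2 * t - 3, l - 2 * t) * n ^_ (2 * t + 3))
    + (n - 2 * t - 3) * 'C(n - 2 * t - 4, l - 2 * t) * n ^_ (2 * t + 3))%N.
  by rewrite -nZ; ring.
rewrite h3 h4; transitivity (C * L * (2 * M ^_ 3 + M ^_ 4))%N; first ring.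
by rewrite ffact3_double_add_ffact4; [ring | lia].
Qed.

Lemma E_rho_runs v l (b : 'I_v) t : (0 < l)%N -> (t.+2 <= v * l)%N -> (t <= l)%N ->
  E_rho l b t = (v * l * 'C(v * l - t - 2, l - t))%:R / 'C(v * l, l)%:R.
Proof.
move=> l0 tn tl; rewrite /E_rho.
under eq_bigr => s _ do rewrite rho_runs.
rewrite (mean_balanced_positions b (fun S => (\sum_(i < v * l) run_at S t i)%N%:R)).
  by rewrite -natr_sum sum_runs.
exact: balanced_exists.
Qed.

Lemma E_rho2_runs v l (b : 'I_v) t : (0 < l)%N -> (0 < t)%N ->
  (2 * t + 3 <= v * l)%N -> (2 * t <= l)%N ->
  E_rho2 l b t = E_rho l b t
    + (v * l * (2 * 'C(v * l - 2 * t - 3, l - 2 * t)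
        + (v * l - 2 * t - 3) * 'C(v * l - 2 * t - 4, l - 2 * t)))%:R / 'C(v * l, l)%:R.
Proof.
move=> l0 t0 tn tl; rewrite /E_rho2 E_rho_runs; try lia.
under eq_bigr => s _ do rewrite rho_runs -natrX.
rewrite (mean_balanced_positions b (fun S => ((\sum_(i < v * l) run_at S t i) ^ 2)%N%:R)).
  by rewrite -natr_sum sum_runs_sqr // -addnA mulnDr natrD mulrDl.
exact: balanced_exists.
Qed.

Theorem theorem6 (v l t : nat) (b : 'I_v) :
  (2 <= v)%N -> (1 <= l)%N -> (1 <= t)%N -> (2 * v * t <= v * l)%N ->
  let n := (v * l)%N in
  let mu : rat :=
    (((l * (v - 1))%:R - 1) * (v - 1)%:R * l%:R * (l ^_ t)%:R)
      / ((n.-1) ^_ t.+1)%:R in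
  E_rho l b t = mu /\
  ((0 < (n.-1) ^_ (2 * t + 2))%N ->
  VAR_rho l b t =
    mu - mu ^+ 2 +
    ((v - 1)%:R * l%:R * (l ^_ (2 * t))%:R * ((l * (v - 1))%:R - 1) ^+ 2
       * ((l * (v - 1))%:R - 2)) / ((n.-1) ^_ (2 * t + 2))%:R).
Proof.
move=> v2 l1 t1 tvl n mu.
have l2t : (2 * t <= l)%N by rewrite -(leq_pmul2l (ltnW v2)) mulnCA mulnA.
have n2l : (2 * l <= n)%N by rewrite leq_mul2r v2 orbT.
have lv : (l * (v - 1) = n - l)%N by rewrite mulnBr muln1 mulnC.
have vl : (v - 1)%:R * l%:R = (n - l)%:R :> rat by rewrite -natrM mulnC lv.
have Emu : E_rho l b t = mu.
  by rewrite E_rho_runs ?mean_runs_ffact /mu; try lia; rewrite lv -(mulrA _ (v - 1)%:R) vl.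
split=> //; rewrite ffact_gt0 => n2t.
rewrite /VAR_rho E_rho2_runs ?Emu ?pair_runs_ffact; try lia.
by rewrite lv -vl; ring.
Qed.
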